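(* Let $S=S'aS''$ where $S',S''$ are words and the letter $a$ occurs in $S$ exactly once. Then a word $C$ is an s-cover of $S$ if and only if $C=C'aC''$ where $C'$ is an s-cover of $S'$ and $C''$ is an s-cover of $S''$.
   Context: For words $C,S$, $C$ is an \emph{s-cover} of $S$ if for every position $i$ of $S$ there exist indices $j_0<\dots<j_{|C|-1}$ with $S[j_t]=C[t]$ for all $t$ and $i\in\{j_0,\dots,j_{|C|-1}\}$; by this definition the empty word is an s-cover of the empty word, and the empty word is not an s-cover of any nonempty word unless... (only words whose positions all lie in occurrences count; a nonempty word's s-covers are nonempty). *)

From mathcomp Require Import all_boot.
Set Implicit Arguments. Unset Strict Implicit. Unset Printing Implicit Defensive.

(* [js] is an occurrence of [C] in [S]: a strictly increasing list of
   positions j_0 < ... < j_{|C|-1} of S with S[j_t] = C[t]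
   (onth S j = Some C[t] forces j < size S and |js| = |C|). *)
Definition occurrence (T : eqType) (C S : seq T) (js : seq nat) : Prop :=
  sorted ltn js /\ map (onth S) js = map Some C.

(* C is an s-cover of S: C occurs in S, and every position of S lies in
   some occurrence of C. (The first conjunct only matters for S empty:
   it makes the empty word the unique s-cover of the empty word.) *)
Definition s_cover (T : eqType) (C S : seq T) : Prop :=
  (exists js, occurrence C S js) /\
  forall i, i < size S -> exists js, occurrence C S js /\ i \in js.

From mathcomp Require Import all_boot zify.

Set Implicit Arguments.
Unset Strict Implicit.
Unset Printing Implicit Defensive.

(* Since a occurs once in S' a S'', every occurrence of a word C' a C'' in it
   must send the displayed a to the middle position; the positions before it
   then form an occurrence of C' in S' and those after it an occurrence of
   C'' in S''.  Conversely, occurrences in S' and S'' glue, through the middle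
   position, into occurrences of C' a C'' that hit any prescribed position. *)

Section Occurrence.
Variable T : eqType.
Implicit Types (C S : seq T) (js : seq nat).

Lemma occurrence_size C S js : occurrence C S js -> size js = size C.
Proof. by move=> [_ /(congr1 size)]; rewrite !size_map. Qed.

Lemma occurrence_lt C S js j : occurrence C S js -> j \in js -> j < size S.
Proof.
move=> [_ E] /(map_f (onth S)); rewrite E => /mapP [c _ Ej].
by rewrite -onthTE Ej.
Qed.

Lemma occurrence_cat C1 C2 S js1 js2 : size js1 = size C1 ->
  occurrence (C1 ++ C2) S (js1 ++ js2) <->
  [/\ occurrence C1 S js1, occurrence C2 S js2 & allrel ltn js1 js2].
Proof.
move=> size_js1; rewrite /occurrence !sorted_pairwise; try exact: ltn_trans.
rewrite pairwise_cat !map_cat; split.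
  case=> /and3P [rel12 sorted1 sorted2] /eqP.
  by rewrite eqseq_cat ?size_map // => /andP [/eqP E1 /eqP E2].
by case=> [[sorted1 ->] [sorted2 ->] rel12]; rewrite rel12 sorted1 sorted2.
Qed.

Lemma occurrence_cons c C S j js :
  occurrence (c :: C) S (j :: js) <->
  [/\ onth S j = Some c, occurrence C S js & all (ltn j) js].
Proof.
rewrite -[c :: C]/([:: c] ++ C) -[j :: js]/([:: j] ++ js) occurrence_cat //.
by rewrite /occurrence allrel1l /=; split=> [[[_ [->]]] | [-> ]].
Qed.

Lemma occurrence_catl C S1 S2 js : all (gtn (size S1)) js ->
  occurrence C (S1 ++ S2) js <-> occurrence C S1 js.
Proof.
move=> /allP js_lt; rewrite /occurrence.
suff -> : map (onth (S1 ++ S2)) js = map (onth S1) js by [].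
by apply/eq_in_map => j /js_lt /= j_lt; rewrite onth_cat j_lt.
Qed.

Lemma occurrence_catr C S1 S2 js :
  occurrence C (S1 ++ S2) (map (addn (size S1)) js) <-> occurrence C S2 js.
Proof.
rewrite /occurrence sorted_map (@eq_sorted _ _ ltn); last first.
  by move=> i j /=; rewrite ltn_add2l.
rewrite -map_comp (@eq_map _ _ _ (onth S2)) // => j /=.
by rewrite onth_cat ltnNge leq_addr addKn.
Qed.

End Occurrence.

Section LetterSplit.
Variables (T : eqType) (S' S'' : seq T) (a : T).

Local Notation S := (S' ++ a :: S'').
Local Notation glue js1 js2 := (js1 ++ size S' :: map (addn (size S').+1) js2).

Lemma onth_mid : onth S (size S') = Some a.
Proof. by rewrite onth_cat ltnn subnn. Qed.

Lemma occurrence_glue C1 C2 js1 js2 : size js1 = size C1 ->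
  occurrence (C1 ++ a :: C2) S (glue js1 js2) <->
  occurrence C1 S' js1 /\ occurrence C2 S'' js2.
Proof.
move=> size_js1; rewrite occurrence_cat // allrel_consr.
have shift_occ : occurrence C2 S (map (addn (size S').+1) js2) <->
    occurrence C2 S'' js2.
  by rewrite -cat_rcons -(size_rcons S' a) occurrence_catr.
split=> [[occ1 /occurrence_cons [_ /shift_occ occ2 _] /andP [js1_lt _]] |
         [occ1 occ2]].
  by split=> //; apply/(occurrence_catl _ (a :: S'') js1_lt).
have js1_lt : all (gtn (size S')) js1.
  by apply/allP => j /(occurrence_lt occ1).
split; first exact/(occurrence_catl _ (a :: S'') js1_lt).
  apply/occurrence_cons; split; [exact: onth_mid | exact/shift_occ |].
  by apply/allP => _ /mapP [j _ ->] /=; lia.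
rewrite js1_lt; apply/allrelP => i _ i_js1 /mapP [j _ ->].
by have := occurrence_lt occ1 i_js1; lia.
Qed.

Lemma occurrence_mid_split C js :
  occurrence C S js -> size S' \in js -> exists C1 C2, C = C1 ++ a :: C2.
Proof.
move=> [_ E] mid_js; set t := index (size S') js.
have : map (onth S) (drop t js) = map Some (drop t C) by rewrite !map_drop E.
rewrite (drop_nth 0) ?index_mem // nth_index //= onth_mid.
case E_drop: (drop t C) => [// | c C2] [-> _].
by exists (take t C), C2; rewrite -E_drop cat_take_drop.
Qed.

Hypothesis a_once : count_mem a S = 1.

Lemma onth_eq_letter j : onth S j = Some a -> j = size S'.
Proof.
move: a_once; rewrite count_cat /= eqxx => count_a.
have a_notin s : count_mem a s = 0 -> a \notin s.
  by move=> count0; rewrite -has_pred1 has_count count0.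
have /onthPn a_S' : a \notin S' by apply: a_notin; lia.
have /onthPn a_S'' : a \notin S'' by apply: a_notin; lia.
rewrite onth_cat; case: ltngtP => // j_S' Ej.
  by have := a_S' j; rewrite Ej eqxx.
case E: (j - size S') Ej => [| k] /= Ej; first lia.
by have := a_S'' k; rewrite Ej eqxx.
Qed.

Lemma occurrence_unglue C1 C2 js :
  occurrence (C1 ++ a :: C2) S js ->
  exists js1 js2, js = glue js1 js2 /\ size js1 = size C1.
Proof.
move=> occ; have size_js := occurrence_size occ.
have size_take : size (take (size C1) js) = size C1.
  by rewrite size_takel // size_js size_cat leq_addr.
move: occ; rewrite -(cat_take_drop (size C1) js) occurrence_cat //.
case E_drop: (drop (size C1) js) => [| j rest] [_ occ2 _].
  by move: (size_drop (size C1) js); rewrite E_drop size_js size_cat /=; lia.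
case/occurrence_cons: occ2 => /onth_eq_letter -> _ /allP rest_gt.
exists (take (size C1) js), (map (subn^~ (size S').+1) rest); split=> //.
rewrite -map_comp map_id_in // => i /rest_gt /=; lia.
Qed.

Lemma s_cover_glue C1 C2 :
  s_cover C1 S' -> s_cover C2 S'' -> s_cover (C1 ++ a :: C2) S.
Proof.
move=> [[js1 occ1] cov1] [[js2 occ2] cov2].
have glue_occ k1 k2 : occurrence C1 S' k1 -> occurrence C2 S'' k2 ->
    occurrence (C1 ++ a :: C2) S (glue k1 k2).
  by move=> o1 o2; apply/occurrence_glue; first exact: occurrence_size o1.
split; first by exists (glue js1 js2); apply: glue_occ.
move=> i; rewrite size_cat /= => i_lt; case: (ltngtP i (size S')) => i_S'.
- have [k [occ i_k]] := cov1 i i_S'.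
  by exists (glue k js2); rewrite mem_cat i_k; split=> //; apply: glue_occ.
- have [k [occ i_k]] := cov2 (i - (size S').+1) ltac:(lia).
  exists (glue js1 k); split; first exact: glue_occ.
  rewrite mem_cat inE; apply/or3P/Or33/mapP.
  by exists (i - (size S').+1) => //; lia.
- exists (glue js1 js2); split; first exact: glue_occ.
  by rewrite mem_cat inE i_S' eqxx orbT.
Qed.

Lemma s_cover_unglue C1 C2 :
  s_cover (C1 ++ a :: C2) S -> s_cover C1 S' /\ s_cover C2 S''.
Proof.
move=> [[js occ] cov].
have unglue k : occurrence (C1 ++ a :: C2) S k -> exists k1 k2,
    [/\ k = glue k1 k2, occurrence C1 S' k1 & occurrence C2 S'' k2].
  move=> occ_k; have [k1 [k2 [E_k size_k1]]] := occurrence_unglue occ_k.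
  subst k.
  have [occ_k1 occ_k2] := (occurrence_glue _ _ size_k1).1 occ_k.
  by exists k1, k2.
have [js1 [js2 [_ occ1 occ2]]] := unglue js occ.
split; split; [by exists js1 | | by exists js2 |].
- move=> i i_lt; have [k [occ_k i_k]] := cov i ltac:(rewrite size_cat; lia).
  have [k1 [k2 [E_k occ_k1 _]]] := unglue k occ_k; subst k.
  move: i_k; rewrite mem_cat inE => /or3P [i_k1 | /eqP | /mapP [j _]].
  + by exists k1.
  + lia.
  + lia.
- move=> i i_lt; have [k [occ_k i_k]] :=
    cov ((size S').+1 + i) ltac:(rewrite size_cat /=; lia).
  have [k1 [k2 [E_k occ_k1 occ_k2]]] := unglue k occ_k; subst k.
  move: i_k; rewrite mem_cat inE => /or3P [/(occurrence_lt occ_k1) | /eqP | ].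
  + lia.
  + lia.
  by rewrite mem_map; [exists k2 | exact: addnI].
Qed.

End LetterSplit.

Theorem mainTheorem18 (T : eqType) (S' S'' C : seq T) (a : T) :
  count_mem a (S' ++ a :: S'') = 1 ->
  (s_cover C (S' ++ a :: S'') <->
   exists C' C'', C = C' ++ a :: C'' /\ s_cover C' S' /\ s_cover C'' S'').
Proof.
move=> a_once; split=> [cov | [C' [C'' [-> [cov' cov'']]]]].
  have [js [occ mid_js]] : exists js, occurrence C (S' ++ a :: S'') js /\
      size S' \in js by apply: cov.2; rewrite size_cat /=; lia.
  have [C' [C'' E]] := occurrence_mid_split occ mid_js.
  exists C', C''; split=> //.
  by apply: (s_cover_unglue a_once); rewrite -E.
exact: s_cover_glue.
Qed.
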